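(* Let $(G,\circ)$ be a commutative group, $K$ a field, $t\in G$, $f:G\times G\to K$, and let $A=A_G(f,t)$. For $m\in\mathbb N$, one has $A^{[m]}=0$ if and only if $$\prod_{k=0}^{m-1}\ \prod_{s=0}^{2^{m-k-1}-1} f\Big(t^{2^k-1}\circ\prod_{q=1}^{2^k} a_{2^{k+1}s+q},\ \ t^{2^k-1}\circ\prod_{l=1}^{2^k} a_{2^{k+1}s+2^k+l}\Big)=0$$ for all $a_1,\dots,a_{2^m}\in G$ (products inside $f$ taken with respect to $\circ$). In particular, $A$ is solvable if and only if such an $m$ exists, and its index of solvability is the least such $m$.
   Context: The algebra $A_G(f,t)$ is the $K$-vector space with basis $\{e_a : a\in G\}$ and bilinear multiplication $e_a e_b = f(a,b)\, e_{a\circ b\circ t}$. The derived sequence is $A^{[0]}=A$, $A^{[k+1]}=A^{[k]}A^{[k]}$ (span of products); $A$ is solvable if $A^{[m]}=0$ for some $m$, and the least such $m$ is the index of solvability. *)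

From HB Require Import structures.
From mathcomp Require Import all_boot all_order all_algebra.
Set Implicit Arguments. Unset Strict Implicit. Unset Printing Implicit Defensive.
Import GRing.Theory.
Local Open Scope ring_scope.

(* The commutative group (G, o) is written additively as a zmodType:
   a o b = a + b, t^n = t *+ n.  Elements of A_G(f,t) are represented by
   finite formal combinations  sum c_i e_{g_i}  (a seq of pairs (c_i, g_i)),
   whose coefficient function G -> K is [coef v]. *)
Section AlgebraAG.
Variables (G : zmodType) (K : fieldType) (f : G -> G -> K) (t : G).

Definition coef (v : seq (K * G)) (g : G) : K :=
  \sum_(p <- v | p.2 == g) p.1.

(* bilinear extension of  e_a e_b = f(a,b) e_{a o b o t} *)
Definition agmul (v w : seq (K * G)) : seq (K * G) :=
  [seq (p.1 * q.1 * f p.2 q.2, p.2 + q.2 + t) | p <- v, q <- w].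

Definition agscale (c : K) (v : seq (K * G)) : seq (K * G) :=
  [seq (c * p.1, p.2) | p <- v].

(* [derived k u] : u (a coefficient function) is an element of A^{[k]}.
   A^{[0]} = A (all finitely supported functions),
   A^{[k+1]} = K-span of the products x y with x, y in A^{[k]}. *)
Fixpoint derived (k : nat) (u : G -> K) : Prop :=
  match k with
  | 0 => exists v : seq (K * G), u =1 coef v
  | k'.+1 =>
      exists s : seq (K * seq (K * G) * seq (K * G)),
        (forall e, e \in s -> derived k' (coef e.1.2) /\ derived k' (coef e.2))
        /\ u =1 coef (flatten [seq agscale e.1.1 (agmul e.1.2 e.2) | e <- s])
  end.

Definition derived_zero (m : nat) : Prop :=
  forall u, derived m u -> u =1 (fun _ => 0).

Definition ag_solvable : Prop := exists m, derived_zero m.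

Definition solv_index (m : nat) : Prop :=
  derived_zero m /\ forall m', (m' < m)%N -> ~ derived_zero m'.

(* The product condition; a_j (j = 1..2^m) is [a (j-1)]. *)
Definition prod_cond (m : nat) : Prop :=
  forall a : nat -> G,
    \prod_(k < m) \prod_(s < 2 ^ (m - k - 1))
      f (t *+ (2 ^ k - 1) + \sum_(q < 2 ^ k) a (2 ^ k.+1 * s + q)%N)
        (t *+ (2 ^ k - 1) + \sum_(l < 2 ^ k) a (2 ^ k.+1 * s + 2 ^ k + l)%N) = 0.
End AlgebraAG.

From HB Require Import structures.
From mathcomp Require Import all_boot all_order all_algebra.
From mathcomp Require Import zify.
Set Implicit Arguments. Unset Strict Implicit.
Import GRing.Theory.
Local Open Scope ring_scope.

(* For a : nat -> G the basis vectors
   e_(a 0), ..., e_(a (2^k - 1)), multiplied along a complete binary tree of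
   depth k, give a single basis vector:  tree product = weight k a . e_(gen k a),
   where gen k a = t *+ (2^k - 1) + sum_(q < 2^k) a q and the scalar weight k a
   satisfies weight (k+1) a = weight k a * weight k a' * f (gen k a) (gen k a')
   with a' the second half of a.
   (1) Every such tree product lies in A^[k]; conversely every element of
       A^[k] is supported on indices gen k a with weight k a != 0 (induction on
       k, using that a product x y can only have a nonzero coefficient at
       g = x' + y' + t when x, y have nonzero coefficients at x', y').
       Hence A^[m] = 0 iff weight m a = 0 for all a.
   (2) Unfolding the recursion, weight m a is exactly the double product of
       the product condition, so A^[m] = 0 iff prod_cond m. *)

Lemma sum_nonzero_witness (I : eqType) (R : nmodType) (r : seq I) (F : I -> R) :
  \sum_(i <- r) F i != 0 -> exists2 i, i \in r & F i != 0.
Proof.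
move=> nz; case: (boolP (has (fun i => F i != 0) r)) => [/hasP [i ? ?]|/hasPn all0].
  by exists i.
by move: nz; rewrite big1_seq ?eqxx // => i /andP [_ /all0]; rewrite negbK => /eqP.
Qed.

Section Coefficients.
Variables (G : zmodType) (K : fieldType).

Lemma sum_by_coef (X : seq G) (v : seq (K * G)) (H : G -> K) :
  uniq X -> {subset map snd v <= X} ->
  \sum_(p <- v) p.1 * H p.2 = \sum_(x <- X) coef v x * H x.
Proof.
move=> uniqX; elim: v => [|p v IHv] sub.
  by rewrite big_nil; symmetry; apply: big1 => x _; rewrite /coef big_nil mul0r.
rewrite big_cons IHv; last by move=> x xv; apply: sub; rewrite inE xv orbT.
have coef_cons x : coef (p :: v) x = (if p.2 == x then p.1 else 0) + coef v x.
  by rewrite /coef big_cons; case: ifP => _; rewrite ?add0r.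
under [RHS]eq_bigr => x _ do rewrite coef_cons mulrDl.
rewrite big_split /=; congr (_ + _).
have pX : p.2 \in X by apply: sub; rewrite inE eqxx.
rewrite (bigD1_seq p.2) //= eqxx big1 ?addr0 // => x.
by rewrite eq_sym => /negbTE ->; rewrite mul0r.
Qed.

Lemma weighted_sum_nonzero (v : seq (K * G)) (H : G -> K) :
  \sum_(p <- v) p.1 * H p.2 != 0 -> exists x, coef v x * H x != 0.
Proof.
rewrite (@sum_by_coef (undup (map snd v))) ?undup_uniq //; last first.
  by move=> x; rewrite mem_undup.
by case/sum_nonzero_witness => x _ nz; exists x.
Qed.

Lemma coef_agmul_nonzero (f : G -> G -> K) (t : G) v w g :
  coef (agmul f t v w) g != 0 ->
  exists x y, [/\ coef v x != 0, coef w y != 0, f x y != 0 & g = x + y + t].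
Proof.
rewrite /coef /agmul big_mkcond big_allpairs_dep /=.
pose fg x y := if x + y + t == g then f x y else 0.
rewrite (eq_bigr (fun p => p.1 * \sum_(q <- w) q.1 * fg p.2 q.2)); last first.
  move=> p _; rewrite big_distrr /=; apply: eq_bigr => q _.
  by rewrite /fg; case: ifP; rewrite ?mulr0 // mulrA.
case/(weighted_sum_nonzero (H := fun x => \sum_(q <- w) q.1 * fg x q.2)) => x.
rewrite mulf_eq0 negb_or => /andP [cx].
case/(weighted_sum_nonzero (H := fg x)) => y; rewrite mulf_eq0 negb_or => /andP [cy].
rewrite /fg; case: (x + y + t =P g) => [<- fxy|_]; first by exists x, y.
by rewrite eqxx.
Qed.

End Coefficients.

Section TreeProducts.
Variables (G : zmodType) (K : fieldType) (t : G) (f : G -> G -> K).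

(* Index of the depth-k tree product of e_(a 0), ..., e_(a (2^k - 1)). *)
Definition gen (k : nat) (a : nat -> G) : G :=
  t *+ (2 ^ k - 1) + \sum_(q < 2 ^ k) a q.

Definition shift (k : nat) (a : nat -> G) : nat -> G := fun i => a (2 ^ k + i)%N.

(* Scalar of the depth-k tree product. *)
Fixpoint weight (k : nat) (a : nat -> G) : K :=
  if k is k'.+1 then
    weight k' a * weight k' (shift k' a) * f (gen k' a) (gen k' (shift k' a))
  else 1.

Lemma gen_ext k a b : (forall i, (i < 2 ^ k)%N -> a i = b i) -> gen k a = gen k b.
Proof. by move=> eq_ab; congr (_ + _); apply: eq_bigr => i _; apply: eq_ab. Qed.

Lemma weight_ext k a b : (forall i, (i < 2 ^ k)%N -> a i = b i) -> weight k a = weight k b.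
Proof.
elim: k a b => [//|k IHk] a b eq_ab /=.
have lo : forall i, (i < 2 ^ k)%N -> a i = b i.
  by move=> i lt_i; apply: eq_ab; rewrite expnS; lia.
have hi : forall i, (i < 2 ^ k)%N -> shift k a i = shift k b i.
  by move=> i lt_i; apply: eq_ab; rewrite expnS; lia.
by rewrite (IHk _ _ lo) (IHk _ _ hi) (gen_ext lo) (gen_ext hi).
Qed.

Lemma gen_succ k a : gen k.+1 a = gen k a + gen k (shift k a) + t.
Proof.
rewrite /gen expnS mul2n -addnn big_split_ord /=.
have -> : (2 ^ k + 2 ^ k - 1 = (2 ^ k - 1) + (2 ^ k - 1) + 1)%N.
  by have := expn_gt0 2 k; lia.
by rewrite !mulrnDr mulr1n [in RHS]addrACA [RHS]addrAC.
Qed.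

Lemma tree_product_derived k a :
  derived f t k (coef [:: (weight k a, gen k a)]).
Proof.
elim: k a => [|k IHk] a /=; first by exists [:: (1, gen 0 a)].
exists [:: (1, [:: (weight k a, gen k a)], [:: (weight k (shift k a), gen k (shift k a))])].
split; first by move=> e; rewrite inE => /eqP -> /=; split; apply: IHk.
by move=> g; rewrite /= gen_succ mul1r.
Qed.

Lemma derived_support k u : derived f t k u ->
  forall g, u g != 0 -> exists a, g = gen k a /\ weight k a != 0.
Proof.
elim: k u => [|k IHk] u /=.
  move=> _ g _; exists (fun _ => g); split; last exact: oner_neq0.
  by rewrite /gen expn0 subnn mulr0n add0r big_ord1.
move=> [s [sub_s eq_u]] g; rewrite eq_u /coef big_flatten big_map /=.
case/sum_nonzero_witness => e e_s.
rewrite big_map /= -big_distrr /= mulf_eq0 negb_or => /andP [_].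
case/coef_agmul_nonzero => x [y [cx cy fxy ->]].
have [dx dy] := sub_s e e_s.
have [a1 [x_gen w1]] := IHk _ dx x cx.
have [a2 [y_gen w2]] := IHk _ dy y cy.
pose a i := if (i < 2 ^ k)%N then a1 i else a2 (i - 2 ^ k)%N.
have lo : forall i, (i < 2 ^ k)%N -> a i = a1 i by move=> i lt_i; rewrite /a lt_i.
have hi : forall i, (i < 2 ^ k)%N -> shift k a i = a2 i.
  by move=> i _; rewrite /shift /a ifN ?addKn // -leqNgt leq_addr.
exists a; rewrite gen_succ /= (weight_ext lo) (weight_ext hi).
by rewrite (gen_ext lo) (gen_ext hi) -x_gen -y_gen !mulf_neq0.
Qed.

Lemma derived_zero_weight m : derived_zero f t m <-> forall a, weight m a = 0.
Proof.
split => [zero a|wt0 u du g].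
  have := zero _ (tree_product_derived m a) (gen m a).
  by rewrite /coef big_cons eqxx big_nil addr0.
apply/eqP/negPn/negP => /(derived_support du) [a [_]].
by rewrite wt0 eqxx.
Qed.

Definition block_factor (k s : nat) (a : nat -> G) : K :=
  f (t *+ (2 ^ k - 1) + \sum_(q < 2 ^ k) a (2 ^ k.+1 * s + q)%N)
    (t *+ (2 ^ k - 1) + \sum_(l < 2 ^ k) a (2 ^ k.+1 * s + 2 ^ k + l)%N).

Lemma block_factors_split m (k : 'I_m) a :
  \prod_(s < 2 ^ (m.+1 - k - 1)) block_factor k s a =
  \prod_(s < 2 ^ (m - k - 1)) block_factor k s a *
  \prod_(s < 2 ^ (m - k - 1)) block_factor k s (shift m a).
Proof.
have lt_km := ltn_ord k.
have -> : (2 ^ (m.+1 - k - 1) = 2 ^ (m - k - 1) + 2 ^ (m - k - 1))%N.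
  by rewrite addnn -mul2n -expnS; congr (2 ^ _)%N; lia.
rewrite big_split_ord /=; congr (_ * _); apply: eq_bigr => s _.
have blocks : (2 ^ k.+1 * 2 ^ (m - k - 1) = 2 ^ m)%N.
  by rewrite -expnD; congr (2 ^ _)%N; lia.
rewrite /block_factor /shift; congr (f (_ + _) (_ + _)); apply: eq_bigr => q _;
  rewrite mulnDr blocks; congr (a _); lia.
Qed.

Lemma block_factors_weight m a :
  \prod_(k < m) \prod_(s < 2 ^ (m - k - 1)) block_factor k s a = weight m a.
Proof.
elim: m a => [|m IHm] a; first by rewrite big_ord0.
rewrite big_ord_recr /= (eq_bigr _ (fun k _ => block_factors_split k a)).
rewrite big_split /= !IHm subSnn subnn expn0 big_ord1 /block_factor muln0.
by congr (_ * f (_ + _) (_ + _)); apply: eq_bigr => i _; rewrite add0n.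
Qed.

Lemma prod_cond_weight m : prod_cond f t m <-> forall a, weight m a = 0.
Proof.
by split => zero a; [rewrite -block_factors_weight | rewrite block_factors_weight];
   apply: zero.
Qed.

Lemma derived_zero_prod_cond m : derived_zero f t m <-> prod_cond f t m.
Proof. by rewrite derived_zero_weight prod_cond_weight. Qed.

End TreeProducts.

Theorem proposition3p2 (G : zmodType) (K : fieldType) (t : G) (f : G -> G -> K) :
  (forall m : nat, derived_zero f t m <-> prod_cond f t m)
  /\ (ag_solvable f t <-> exists m : nat, prod_cond f t m)
  /\ (forall m : nat, solv_index f t m <->
        (prod_cond f t m /\ forall m', (m' < m)%N -> ~ prod_cond f t m')).
Proof.
have equiv := @derived_zero_prod_cond G K t f.
split=> //; split.
  by split=> [[m /equiv]|[m /equiv]]; exists m.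
move=> m; rewrite /solv_index equiv.
by split=> [[zero least]|[zero least]]; split=> // m' lt_m';
   [move/equiv | rewrite equiv]; exact: least.
Qed.
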